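(* Let $\mathbb{X}$ be an algebra with identity (not necessarily normed) over a field $\mathcal{F}$, let $\mathcal{G}$ be its group of units, let $k\ge1$ be an integer, let $a_0,\dots,a_k,b_0,\dots,b_k\in\mathbb{X}$, and let $g_n:\mathbb{X}\to\mathbb{X}$, $n\ge 0$, be arbitrary functions. Consider $$x_{n+1}=\sum_{i=0}^{k}a_ix_{n-i}+g_n\Big(\sum_{i=0}^{k}b_ix_{n-i}\Big),\quad n\ge0. \tag{E}$$ Suppose the polynomials $$P(\xi)=\xi^{k+1}-\sum_{i=0}^{k}a_i\xi^{k-i},\qquad Q(\xi)=\sum_{i=0}^{k}b_i\xi^{k-i}$$ have a common root $\rho\in\mathcal{G}$, i.e. $P(\rho)=Q(\rho)=0$. For $i=0,\dots,k-1$ put $$p_i=\rho^{i+1}-a_0\rho^i-a_1\rho^{i-1}-\cdots-a_i,\qquad q_i=b_0\rho^i+b_1\rho^{i-1}+\cdots+b_i.$$ Then each solution $\{x_n\}$ of (E) with initial values $x_0,\dots,x_{-k}\in\mathbb{X}$ satisfies $x_{n+1}=\rho x_n+t_{n+1}$ for all $n\ge -k$, where $\{t_n\}_{n\ge -k+1}$ is the unique solution of the order-$k$ equation $$t_{n+1}=-\sum_{i=0}^{k-1}p_it_{n-i}+g_n\Big(\sum_{i=0}^{k-1}q_it_{n-i}\Big),\quad n\ge0, \tag{F}$$ with initial values $t_{-i}=x_{-i}-\rho x_{-i-1}$, $i=0,1,\dots,k-1$. Conversely, if $\{t_n\}$ is a solution of (F) with initial values $t_0,\dots,t_{-k+1}\in\mathbb{X}$,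 and $x_{-k}\in\mathbb{X}$ is arbitrary, then the sequence defined by $x_{m+1}=\rho x_m+t_{m+1}$ for $m\ge -k$ is a solution of (E).
   Context: In the possibly noncommutative algebra $\mathbb{X}$, polynomials are evaluated with coefficients written on the left, e.g. $P(\rho)=\rho^{k+1}-\sum_{i=0}^k a_i\rho^{k-i}$. An element $u$ is a unit if it has a two-sided inverse $u^{-1}$; $\mathcal{G}$ denotes the set of units. *)

From HB Require Import structures.
From mathcomp Require Import all_boot all_order all_algebra.
Set Implicit Arguments. Unset Strict Implicit. Unset Printing Implicit Defensive.
Import Order.TTheory GRing.Theory Num.Theory.
Local Open Scope ring_scope.

(* Polynomials with left coefficients, evaluated at rho (noncommutative). *)
Definition Pev (X : nzRingType) (k : nat) (a : nat -> X) (rho : X) : X :=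
  rho ^+ k.+1 - \sum_(i < k.+1) a i * rho ^+ (k - i).
Definition Qev (X : nzRingType) (k : nat) (b : nat -> X) (rho : X) : X :=
  \sum_(i < k.+1) b i * rho ^+ (k - i).

Definition pcoef (X : nzRingType) (a : nat -> X) (rho : X) (i : nat) : X :=
  rho ^+ i.+1 - \sum_(j < i.+1) a j * rho ^+ (i - j).
Definition qcoef (X : nzRingType) (b : nat -> X) (rho : X) (i : nat) : X :=
  \sum_(j < i.+1) b j * rho ^+ (i - j).

Definition is_unit (X : nzRingType) (u : X) : Prop :=
  exists v : X, u * v = 1 /\ v * u = 1.

Definition solves_E (X : nzRingType) (k : nat) (a b : nat -> X)
  (g : nat -> X -> X) (x : int -> X) : Prop :=
  forall n : nat,
    x (n%:Z + 1) = \sum_(i < k.+1) a i * x (n%:Z - i%:Z)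
                   + g n (\sum_(i < k.+1) b i * x (n%:Z - i%:Z)).

Definition solves_F (X : nzRingType) (k : nat) (a b : nat -> X) (rho : X)
  (g : nat -> X -> X) (t : int -> X) : Prop :=
  forall n : nat,
    t (n%:Z + 1) = - (\sum_(i < k) pcoef a rho i * t (n%:Z - i%:Z))
                   + g n (\sum_(i < k) qcoef b rho i * t (n%:Z - i%:Z)).

From mathcomp Require Import all_boot all_order all_algebra zify.
Import Order.TTheory GRing.Theory.
Set Implicit Arguments. Unset Strict Implicit.
Local Open Scope ring_scope.

(* For a sequence x put  d(m) = x(m) - rho x(m-1)  (the
   rho-difference of x).  Summation by parts, using the recursions
   p_(i+1) = p_i rho - a_(i+1)  and  q_(i+1) = q_i rho + b_(i+1), gives
     sum_(i<=k) a_i x(n-i) = rho x(n) - sum_(i<k) p_i d(n-i) - p_k x(n-k),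
     sum_(i<=k) b_i x(n-i) = sum_(i<k) q_i d(n-i) + q_k x(n-k),
   and p_k = P(rho), q_k = Q(rho) vanish.  Hence the right-hand side of (E)
   at x equals  rho x(n) + (right-hand side of (F) at d), so x solves (E)
   iff d solves (F) (from index 1 on).  The first half of the theorem then
   follows from uniqueness of solutions of (F) with given k initial values,
   the second half from the fact that the right-hand side of (F) at time n
   only reads the window t(n), ..., t(n-k+1). *)

Section Reduction.

Variables (X : nzRingType) (a b : nat -> X) (rho : X).

Definition rdiff (x : int -> X) (m : int) : X := x m - rho * x (m - 1).

Lemma rdiffS (x : int -> X) (m : int) : rdiff x (m + 1) = x (m + 1) - rho * x m.
Proof. by rewrite /rdiff addrK. Qed.

Lemma horner_sumS (c : nat -> X) (K : nat) :
  \sum_(j < K.+2) c j * rho ^+ (K.+1 - j) =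
  (\sum_(j < K.+1) c j * rho ^+ (K - j)) * rho + c K.+1.
Proof.
rewrite big_ord_recr /= subnn expr0 mulr1 mulr_suml; congr (_ + _).
by apply: eq_bigr => j _; rewrite -mulrA -exprSr subSn // -ltnS.
Qed.

Lemma pcoefS (i : nat) : pcoef a rho i.+1 = pcoef a rho i * rho - a i.+1.
Proof. by rewrite /pcoef horner_sumS mulrBl -exprSr opprD addrA. Qed.

Lemma qcoefS (i : nat) : qcoef b rho i.+1 = qcoef b rho i * rho + b i.+1.
Proof. by rewrite /qcoef horner_sumS. Qed.

Lemma pcoef0 : pcoef a rho 0 = rho - a 0.
Proof. by rewrite /pcoef big_ord1 expr1 expr0 mulr1. Qed.

Lemma qcoef0 : qcoef b rho 0 = b 0.
Proof. by rewrite /qcoef big_ord1 expr0 mulr1. Qed.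

Lemma int_predS (n : int) (K : nat) : n - K.+1%:Z = n - K%:Z - 1.
Proof. lia. Qed.

Lemma sum_pcoef_rdiff (x : int -> X) (n : int) (K : nat) :
  \sum_(i < K) pcoef a rho i * rdiff x (n - i%:Z) =
  rho * x n - \sum_(i < K.+1) a i * x (n - i%:Z) - pcoef a rho K * x (n - K%:Z).
Proof.
elim: K => [|K IH].
  by rewrite big_ord0 big_ord1 pcoef0 subr0 mulrBl opprB addrA subrK subrr.
rewrite big_ord_recr /= IH [in RHS]big_ord_recr /= pcoefS int_predS /rdiff.
move: (pcoef a rho K) => P.
by rewrite mulrBr mulrBl opprB opprD !addrA !subrK mulrA.
Qed.

Lemma sum_qcoef_rdiff (x : int -> X) (n : int) (K : nat) :
  \sum_(i < K) qcoef b rho i * rdiff x (n - i%:Z) =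
  \sum_(i < K.+1) b i * x (n - i%:Z) - qcoef b rho K * x (n - K%:Z).
Proof.
elim: K => [|K IH].
  by rewrite big_ord0 big_ord1 qcoef0 subr0 subrr.
rewrite big_ord_recr /= IH [in RHS]big_ord_recr /= qcoefS int_predS /rdiff.
move: (qcoef b rho K) => Q.
by rewrite mulrBr mulrDl opprD !addrA subrK [RHS]addrAC addrK mulrA.
Qed.

End Reduction.

Section Equations.

Variables (X : nzRingType) (k : nat) (a b : nat -> X) (rho : X).
Variable g : nat -> X -> X.

Definition Erhs (x : int -> X) (n : nat) : X :=
  \sum_(i < k.+1) a i * x (n%:Z - i%:Z)
  + g n (\sum_(i < k.+1) b i * x (n%:Z - i%:Z)).

Definition Frhs (t : int -> X) (n : nat) : X :=
  - (\sum_(i < k) pcoef a rho i * t (n%:Z - i%:Z))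
  + g n (\sum_(i < k) qcoef b rho i * t (n%:Z - i%:Z)).

Lemma solves_EE (x : int -> X) :
  solves_E k a b g x = forall n : nat, x (n%:Z + 1) = Erhs x n.
Proof. by []. Qed.

Lemma solves_FE (t : int -> X) :
  solves_F k a b rho g t = forall n : nat, t (n%:Z + 1) = Frhs t n.
Proof. by []. Qed.

Lemma Frhs_local (t u : int -> X) (n : nat) :
  (forall i : nat, (i < k)%N -> t (n%:Z - i%:Z) = u (n%:Z - i%:Z)) ->
  Frhs t n = Frhs u n.
Proof.
move=> tu; rewrite /Frhs; congr (- _ + g n _); apply: eq_bigr => i _;
  by rewrite tu.
Qed.

Lemma solves_F_unique (t u : int -> X) :
  solves_F k a b rho g t -> solves_F k a b rho g u ->
  (forall i : nat, (i < k)%N -> t (- i%:Z) = u (- i%:Z)) ->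
  forall m : int, - k%:Z < m -> t m = u m.
Proof.
rewrite !solves_FE => ht hu init.
have step (n : nat) :
    (forall i : nat, (i < k)%N -> t (n%:Z - i%:Z) = u (n%:Z - i%:Z)) ->
    t (n%:Z + 1) = u (n%:Z + 1).
  by move=> hwin; rewrite ht hu; apply: Frhs_local.
have window (n : nat) (i : nat) : (i < k)%N -> t (n%:Z - i%:Z) = u (n%:Z - i%:Z).
  elim: n i => [|n IH] i ik.
    have -> : 0%:Z - i%:Z = - i%:Z by lia.
    exact: init.
  case: i ik => [|i] ik.
    by rewrite subr0 -addn1 PoszD; apply: step.
  have -> : n.+1%:Z - i.+1%:Z = n%:Z - i%:Z by lia.
  exact/IH/ltnW.
move=> m hm; case: (leP m 0) => hm0.
  have -> : m = - (absz m)%:Z by lia.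
  by apply: init; lia.
have -> : m = (absz m).-1%:Z + 1 by lia.
exact/step/window.
Qed.

Section Shift.

Hypotheses (hP : Pev k a rho = 0) (hQ : Qev k b rho = 0).

Lemma Erhs_shift (x : int -> X) (n : nat) :
  Erhs x n = rho * x n%:Z + Frhs (rdiff rho x) n.
Proof.
(* P(rho) and Q(rho) are, by definition, the coefficients p_k and q_k. *)
have pk0 : pcoef a rho k = 0 := hP.
have qk0 : qcoef b rho k = 0 := hQ.
rewrite /Erhs /Frhs sum_pcoef_rdiff sum_qcoef_rdiff pk0 qk0 !mul0r !subr0.
by rewrite opprB addrA [rho * _ + _]addrC subrK.
Qed.

Lemma solves_F_rdiff (x : int -> X) :
  solves_E k a b g x -> solves_F k a b rho g (rdiff rho x).
Proof.
rewrite solves_EE solves_FE => hE n.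
by rewrite rdiffS hE Erhs_shift addrC addKr.
Qed.

End Shift.

Lemma rdiff_of_shift (t x : int -> X) :
  (forall m : int, - k%:Z <= m -> x (m + 1) = rho * x m + t (m + 1)) ->
  forall m : int, - k%:Z < m -> t m = rdiff rho x m.
Proof.
move=> hx m hm; rewrite /rdiff.
have := hx (m - 1); rewrite subrK => -> ; last by lia.
by rewrite addrC addKr.
Qed.

End Equations.

Theorem lemma3 (F : fieldType) (X : algType F) (k : nat) (hk : (1 <= k)%N)
  (a b : nat -> X) (g : nat -> X -> X) (rho : X)
  (hrho : is_unit rho) (hP : Pev k a rho = 0) (hQ : Qev k b rho = 0) :
  (forall x : int -> X, solves_E k a b g x ->
     forall t : int -> X, solves_F k a b rho g t ->
       (forall i : nat, (i < k)%N ->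
          t (- i%:Z) = x (- i%:Z) - rho * x (- i%:Z - 1)) ->
       forall n : int, - k%:Z <= n -> x (n + 1) = rho * x n + t (n + 1))
  /\
  (forall t : int -> X, solves_F k a b rho g t ->
     forall x : int -> X,
       (forall m : int, - k%:Z <= m -> x (m + 1) = rho * x m + t (m + 1)) ->
       solves_E k a b g x).
Proof.
split=> [x hE t hF init n hn | t hF x hx].
  have agree := solves_F_unique hF (solves_F_rdiff hP hQ hE) init.
  rewrite (agree (n + 1)); last by lia.
  by rewrite rdiffS [RHS]addrC subrK.
rewrite solves_EE => n; rewrite (Erhs_shift g hP hQ) hx; last by lia.
congr (_ + _); rewrite hF; apply: Frhs_local => i ik.
by apply: rdiff_of_shift hx _ _; lia.
Qed.
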